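(* Let $a$ be a real number. The inequality $\Theta_{n,a}(x,y)>0$ holds for all integers $n\ge1$ and all real $x,y\in(0,\pi)$ if and only if $a\ge1$.
   Context: For a real number $a$ and integers $0\le m$, $\binom{m+a}{m}=\frac{(a+1)(a+2)\cdots(a+m)}{m!}$ (equal to $1$ when $m=0$). For an integer $n\ge1$, $\Theta_{n,a}(x,y)=\sum_{j=1}^n\binom{n+a-j}{n-j}\frac{\sin(jx)\sin(jy)}{j}$. *)

From Stdlib Require Import Reals Factorial.
Open Scope R_scope.

Fixpoint rising_prod (a : R) (m : nat) : R :=
  match m with
  | O => 1
  | S k => rising_prod a k * (a + INR (S k))
  end.

(* binom(m+a, m) = (a+1)(a+2)...(a+m) / m!,  equal to 1 when m = 0. *)
Definition gbinom (m : nat) (a : R) : R := rising_prod a m / INR (fact m).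

(* Theta_{n,a}(x,y) = sum_{j=1}^n binom(n+a-j, n-j) sin(jx) sin(jy) / j. *)
Definition Theta (n : nat) (a x y : R) : R :=
  sum_f_R0 (fun i => let j := S i in
    gbinom (n - j)%nat a * sin (INR j * x) * sin (INR j * y) / INR j) (n - 1).

(* Two applications of the hockey-stick identity
   binom(m+a, m) = sum_{i<=m} binom(i+a-1, i) rewrite Theta_{n,a} as a
   combination of the Theta_{k,1} (k <= n), with coefficients
   binom(n-k+a-2, n-k) that are nonnegative when a >= 1 and equal to 1 for
   k = n.  Theta_{k,1} is the double partial sum of sin(jx) sin(jy) / j, that
   is (G_k(x-y) - G_k(x+y)) / 2 for G_k(t) the double partial sum of
   cos(jt) / j.  The derivative of G_k is minus the double partial sum of
   sin(jt), which equals ((k+1) sin t - sin((k+1)t)) / (2 (1 - cos t)) > 0 on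
   (0, pi); so G_k decreases on [0, pi] and Theta_{k,1} > 0.
   Conversely Theta_{2,a}(e, pi - e) = sin^2 e (a - 1 + 2 sin^2 e), which is
   negative for small e > 0 when a < 1. *)
From Stdlib Require Import Reals Lra Lia Factorial.
From Coquelicot Require Import Coquelicot.
Open Scope R_scope.

Fixpoint sum1 (f : nat -> R) (n : nat) : R :=
  match n with O => 0 | S k => sum1 f k + f (S k) end.

Lemma sum1_ext f g n :
  (forall j, (1 <= j <= n)%nat -> f j = g j) -> sum1 f n = sum1 g n.
Proof.
  induction n as [|n IH]; intros Hfg; simpl; [reflexivity|].
  rewrite IH, (Hfg (S n)); [reflexivity|lia|intros; apply Hfg; lia].
Qed.

Lemma sum1_S f n : sum1 f (S n) = sum1 f n + f (S n).
Proof. reflexivity. Qed.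

Lemma sum1_plus f g n : sum1 (fun j => f j + g j) n = sum1 f n + sum1 g n.
Proof. induction n as [|n IH]; simpl; [lra|rewrite IH; ring]. Qed.

Lemma sum1_minus f g n : sum1 (fun j => f j - g j) n = sum1 f n - sum1 g n.
Proof. induction n as [|n IH]; simpl; [lra|rewrite IH; ring]. Qed.

Lemma sum1_opp f n : sum1 (fun j => - f j) n = - sum1 f n.
Proof. induction n as [|n IH]; simpl; [lra|rewrite IH; ring]. Qed.

Lemma sum1_scal c f n : sum1 (fun j => c * f j) n = c * sum1 f n.
Proof. induction n as [|n IH]; simpl; [lra|rewrite IH; ring]. Qed.

Lemma sum1_shift f n : sum1 f (S n) = f 1%nat + sum1 (fun k => f (S k)) n.
Proof. induction n as [|n IH]; simpl in *; [lra|rewrite IH; ring]. Qed.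

Lemma sum1_ge0 f n : (forall j, (1 <= j <= n)%nat -> 0 <= f j) -> 0 <= sum1 f n.
Proof.
  intros Hf; induction n as [|n IH]; simpl; [lra|].
  assert (0 <= sum1 f n) by (apply IH; intros; apply Hf; lia).
  assert (0 <= f (S n)) by (apply Hf; lia).
  lra.
Qed.

Lemma sum_f_R0_sum1 g m : sum_f_R0 g m = sum1 (fun j => g (pred j)) (S m).
Proof. induction m as [|m IH]; simpl in *; [lra|rewrite IH; reflexivity]. Qed.

Lemma sum1_partial_sum_conv d s n :
  sum1 (fun j => sum_f_R0 d (n - j) * s j) n
  = sum1 (fun k => d (n - k)%nat * sum1 s k) n.
Proof.
  set (step m := sum1 (fun j => d (m - j)%nat * s j) m).
  assert (HL : forall m, sum1 (fun j => sum_f_R0 d (S m - j) * s j) (S m)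
    = sum1 (fun j => sum_f_R0 d (m - j) * s j) m + step (S m)).
  { intros m; rewrite sum1_S; unfold step; rewrite sum1_S.
    rewrite Nat.sub_diag, (sum1_ext _ (fun j => sum_f_R0 d (m - j) * s j
                                                + d (S m - j)%nat * s j)).
    - rewrite sum1_plus; simpl; ring.
    - intros j Hj; replace (S m - j)%nat with (S (m - j)) by lia.
      rewrite tech5; ring. }
  assert (HR : forall m, sum1 (fun k => d (S m - k)%nat * sum1 s k) (S m)
    = sum1 (fun k => d (m - k)%nat * sum1 s k) m + step (S m)).
  { intros m; unfold step; rewrite !sum1_shift; simpl sum1.
    rewrite (sum1_ext _ (fun k => d (m - k)%nat * sum1 s k
                                  + d (m - k)%nat * s (S k)))
      by (intros; simpl; ring).
    rewrite sum1_plus; simpl; ring. }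
  induction n as [|n IH]; [reflexivity|].
  rewrite HL, HR, IH; reflexivity.
Qed.

Lemma rising_prod_S_shift c m :
  rising_prod c (S m) = (c + 1) * rising_prod (c + 1) m.
Proof.
  induction m as [|m IH]; [simpl; ring|].
  change (rising_prod c (S (S m))) with (rising_prod c (S m) * (c + INR (S (S m)))).
  change (rising_prod (c + 1) (S m)) with (rising_prod (c + 1) m * (c + 1 + INR (S m))).
  rewrite IH, !S_INR; ring.
Qed.

Lemma gbinom0 c : gbinom 0 c = 1.
Proof. unfold gbinom; simpl; field. Qed.

Lemma gbinom_pascal c m : gbinom (S m) (c + 1) = gbinom m (c + 1) + gbinom (S m) c.
Proof.
  unfold gbinom; rewrite (rising_prod_S_shift c m).
  change (rising_prod (c + 1) (S m)) with (rising_prod (c + 1) m * (c + 1 + INR (S m))).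
  rewrite fact_simpl, mult_INR.
  assert (INR (fact m) <> 0) by (apply not_0_INR, fact_neq_0).
  assert (INR (S m) <> 0) by (apply not_0_INR; lia).
  rewrite S_INR in *; field; split; assumption.
Qed.

Lemma gbinom_hockey_stick a m : gbinom m a = sum_f_R0 (fun i => gbinom i (a - 1)) m.
Proof.
  induction m as [|m IH]; simpl; [rewrite !gbinom0; reflexivity|].
  rewrite <- IH; replace a with (a - 1 + 1) at 1 2 by ring.
  apply gbinom_pascal.
Qed.

Lemma gbinom_ge0 c m : -1 <= c -> 0 <= gbinom m c.
Proof.
  intros Hc; unfold gbinom; apply Rmult_le_pos.
  - induction m as [|m IH]; [simpl; lra|].
    apply Rmult_le_pos; [assumption|].
    pose proof (pos_INR m); rewrite S_INR; lra.
  - left; apply Rinv_0_lt_compat, lt_0_INR; pose proof (lt_O_fact m); lia.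
Qed.

Lemma sin_mul_abs_le t m : Rabs (sin (INR m * t)) <= INR m * Rabs (sin t).
Proof.
  induction m as [|m IH].
  - simpl; rewrite Rmult_0_l, sin_0, Rabs_R0; lra.
  - rewrite S_INR, Rmult_plus_distr_r, Rmult_1_l, sin_plus.
    eapply Rle_trans; [apply Rabs_triang|]; rewrite !Rabs_mult.
    pose proof (Rabs_pos (sin (INR m * t))); pose proof (Rabs_pos (sin t)).
    assert (Rabs (cos t) <= 1) by (apply Rabs_le, COS_bound).
    assert (Rabs (cos (INR m * t)) <= 1) by (apply Rabs_le, COS_bound).
    nra.
Qed.

Lemma sin_mul_lt t m : (2 <= m)%nat -> 0 < t < PI -> sin (INR m * t) < INR m * sin t.
Proof.
  intros Hm Ht; destruct m as [|[|m]]; [lia|lia|].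
  assert (Hs : 0 < sin t) by (apply sin_gt_0; lra).
  assert (Hc : Rabs (cos t) < 1).
  { pose proof (sin2_cos2 t); unfold Rsqr in *; apply Rabs_def1; nra. }
  set (u := INR (S m) * t).
  assert (Hu : sin u * cos t < INR (S m) * sin t).
  { pose proof (sin_mul_abs_le t (S m)) as Hbound.
    rewrite (Rabs_pos_eq (sin t)) in Hbound by lra.
    assert (0 < INR (S m)) by (apply lt_0_INR; lia).
    pose proof (Rle_abs (sin u * cos t)); rewrite Rabs_mult in *.
    pose proof (Rabs_pos (cos t)).
    assert (Rabs (sin u) * Rabs (cos t) <= INR (S m) * sin t * Rabs (cos t))
      by (apply Rmult_le_compat_r; assumption).
    assert (INR (S m) * sin t * Rabs (cos t) < INR (S m) * sin t * 1)
      by (apply Rmult_lt_compat_l; [apply Rmult_lt_0_compat|]; assumption).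
    lra. }
  assert (cos u * sin t <= sin t).
  { assert (cos u <= 1) by apply COS_bound; nra. }
  rewrite (S_INR (S m)), Rmult_plus_distr_r, Rmult_1_l, sin_plus; fold u.
  lra.
Qed.

Lemma sum1_sin_telescope t k :
  2 * (1 - cos t) * sum1 (fun j => sin (INR j * t)) k
  = sin t + sin (INR k * t) - sin (INR (S k) * t).
Proof.
  induction k as [|k IH].
  - simpl; rewrite Rmult_0_l, Rmult_1_l, sin_0; ring.
  - rewrite sum1_S, Rmult_plus_distr_l, IH.
    replace (INR (S (S k)) * t) with (INR (S k) * t + t) by (rewrite (S_INR (S k)); ring).
    replace (INR k * t) with (INR (S k) * t - t) by (rewrite S_INR; ring).
    rewrite sin_plus, sin_minus; ring.
Qed.

Lemma sum1_sum1_sin_eq t k :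
  2 * (1 - cos t) * sum1 (sum1 (fun j => sin (INR j * t))) k
  = (INR k + 1) * sin t - sin (INR (S k) * t).
Proof.
  induction k as [|k IH].
  - simpl; rewrite Rmult_1_l; ring.
  - rewrite sum1_S, Rmult_plus_distr_l, IH, sum1_sin_telescope, (S_INR k); ring.
Qed.

Lemma sum1_sum1_sin_pos t k : (1 <= k)%nat -> 0 < t < PI ->
  0 < sum1 (sum1 (fun j => sin (INR j * t))) k.
Proof.
  intros Hk Ht.
  assert (Hs : 0 < sin t) by (apply sin_gt_0; lra).
  assert (Hc : cos t < 1).
  { pose proof (sin2_cos2 t); unfold Rsqr in *; pose proof (COS_bound t); nra. }
  pose proof (sum1_sum1_sin_eq t k).
  pose proof (sin_mul_lt t (S k) ltac:(lia) Ht); rewrite S_INR in *.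
  nra.
Qed.

Lemma is_derive_sum1 (F F' : nat -> R -> R) n t :
  (forall j, (1 <= j <= n)%nat -> is_derive (F j) t (F' j t)) ->
  is_derive (fun t => sum1 (fun j => F j t) n) t (sum1 (fun j => F' j t) n).
Proof.
  induction n as [|n IH]; intros HF; simpl.
  - auto_derive; reflexivity.
  - apply (is_derive_plus (fun t => sum1 (fun j => F j t) n) (F (S n))).
    + apply IH; intros; apply HF; lia.
    + apply HF; lia.
Qed.

Definition cos_potential (k : nat) (t : R) : R :=
  sum1 (sum1 (fun j => cos (INR j * t) / INR j)) k.

Lemma cos_potential_derive k t :
  is_derive (cos_potential k) t (- sum1 (sum1 (fun j => sin (INR j * t))) k).
Proof.
  rewrite <- sum1_opp, (sum1_ext _ (sum1 (fun j => - sin (INR j * t))))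
    by (intros; symmetry; apply sum1_opp).
  apply (is_derive_sum1 (fun m t => sum1 (fun j => cos (INR j * t) / INR j) m)
                        (fun m t => sum1 (fun j => - sin (INR j * t)) m)).
  intros m _.
  apply (is_derive_sum1 (fun j t => cos (INR j * t) / INR j)
                        (fun j t => - sin (INR j * t))).
  intros j Hj; assert (INR j <> 0) by (apply not_0_INR; lia).
  auto_derive; [exact I|field; assumption].
Qed.

Lemma cos_potential_decreasing k u v : (1 <= k)%nat ->
  0 <= u -> u < v -> v <= PI -> cos_potential k v < cos_potential k u.
Proof.
  intros Hk Hu Huv Hv.
  destruct (MVT_cor2 (cos_potential k)
              (fun t => - sum1 (sum1 (fun j => sin (INR j * t))) k) u v Huv)
    as [c [Hmvt Hc]].
  - intros c _; apply is_derive_Reals, cos_potential_derive.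
  - pose proof (sum1_sum1_sin_pos c k Hk ltac:(lra)); nra.
Qed.

Lemma cos_potential_ext k u v :
  (forall j, cos (INR j * u) = cos (INR j * v)) ->
  cos_potential k u = cos_potential k v.
Proof.
  intros Huv; apply sum1_ext; intros m _; apply sum1_ext; intros j _.
  rewrite Huv; reflexivity.
Qed.

Definition theta_coef (x y : R) (j : nat) : R :=
  sin (INR j * x) * sin (INR j * y) / INR j.

Lemma sum1_sum1_theta_coef_eq k x y :
  sum1 (sum1 (theta_coef x y)) k
  = / 2 * (cos_potential k (x - y) - cos_potential k (x + y)).
Proof.
  unfold cos_potential; rewrite <- sum1_minus, <- sum1_scal.
  apply sum1_ext; intros m _; rewrite <- sum1_minus, <- sum1_scal.
  apply sum1_ext; intros j Hj; unfold theta_coef.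
  assert (INR j <> 0) by (apply not_0_INR; lia).
  replace (INR j * (x - y)) with (INR j * x - INR j * y) by ring.
  replace (INR j * (x + y)) with (INR j * x + INR j * y) by ring.
  rewrite cos_minus, cos_plus.
  field; assumption.
Qed.

Lemma sum1_sum1_theta_coef_pos k x y : (1 <= k)%nat ->
  0 < x < PI -> 0 < y < PI -> 0 < sum1 (sum1 (theta_coef x y)) k.
Proof.
  intros Hk Hx Hy; rewrite sum1_sum1_theta_coef_eq.
  assert (Hd : cos_potential k (x - y) = cos_potential k (Rabs (x - y))).
  { apply cos_potential_ext; intros j; unfold Rabs.
    destruct (Rcase_abs (x - y)); [rewrite <- cos_neg; f_equal; ring|reflexivity]. }
  assert (Habs : Rabs (x - y) < Rmin (x + y) (2 * PI - (x + y))).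
  { apply Rmin_glb_lt; apply Rabs_def1; lra. }
  assert (Hs : cos_potential k (x + y) = cos_potential k (Rmin (x + y) (2 * PI - (x + y)))).
  { apply cos_potential_ext; intros j; unfold Rmin.
    destruct (Rle_dec (x + y) (2 * PI - (x + y))); [reflexivity|].
    rewrite <- (cos_neg (INR j * (2 * PI - (x + y)))),
            <- (cos_period (- (INR j * (2 * PI - (x + y)))) j).
    f_equal; ring. }
  assert (Hpi : Rmin (x + y) (2 * PI - (x + y)) <= PI).
  { unfold Rmin; destruct (Rle_dec (x + y) (2 * PI - (x + y))); lra. }
  pose proof (cos_potential_decreasing k (Rabs (x - y)) _ Hk (Rabs_pos _) Habs Hpi).
  lra.
Qed.

Lemma Theta_sum1 n a x y : (1 <= n)%nat ->
  Theta n a x y = sum1 (fun j => gbinom (n - j) a * theta_coef x y j) n.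
Proof.
  intros Hn; unfold Theta; destruct n as [|m]; [lia|].
  rewrite Nat.sub_1_r, sum_f_R0_sum1; simpl pred.
  apply sum1_ext; intros [|j] Hj; [lia|].
  unfold theta_coef; simpl pred; lra.
Qed.

Lemma Theta_eq_sum1_sum1 n a x y : (1 <= n)%nat ->
  Theta n a x y
  = sum1 (fun k => gbinom (n - k) (a - 2) * sum1 (sum1 (theta_coef x y)) k) n.
Proof.
  intros Hn; rewrite Theta_sum1 by assumption.
  replace (a - 2) with (a - 1 - 1) by ring.
  rewrite (sum1_ext _ (fun j => sum_f_R0 (fun i => gbinom i (a - 1)) (n - j)
                                * theta_coef x y j))
    by (intros; rewrite gbinom_hockey_stick; reflexivity).
  rewrite sum1_partial_sum_conv.
  rewrite (sum1_ext _ (fun k => sum_f_R0 (fun i => gbinom i (a - 1 - 1)) (n - k)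
                                * sum1 (theta_coef x y) k))
    by (intros; rewrite <- gbinom_hockey_stick; reflexivity).
  apply sum1_partial_sum_conv.
Qed.

Lemma Theta_pos n a x y : 1 <= a -> (1 <= n)%nat ->
  0 < x < PI -> 0 < y < PI -> Theta n a x y > 0.
Proof.
  intros Ha Hn Hx Hy; rewrite Theta_eq_sum1_sum1 by assumption.
  destruct n as [|n]; [lia|]; rewrite sum1_S.
  rewrite Nat.sub_diag, gbinom0.
  assert (0 <= sum1 (fun k => gbinom (S n - k) (a - 2)
                              * sum1 (sum1 (theta_coef x y)) k) n).
  { apply sum1_ge0; intros j Hj; apply Rmult_le_pos.
    - apply gbinom_ge0; lra.
    - left; apply sum1_sum1_theta_coef_pos; [lia|assumption|assumption]. }
  pose proof (sum1_sum1_theta_coef_pos (S n) x y ltac:(lia) Hx Hy).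
  lra.
Qed.

Lemma Theta_2_antipodal a e :
  Theta 2 a e (PI - e) = sin e ^ 2 * (a - 1 + 2 * sin e ^ 2).
Proof.
  unfold Theta, gbinom; simpl.
  replace ((1 + 1) * e) with (2 * e) by ring.
  replace ((1 + 1) * (PI - e)) with (2 * PI - 2 * e) by ring.
  rewrite !Rmult_1_l, sin_PI_x, sin_minus, sin_2PI, cos_2PI, sin_2a.
  pose proof (sin2_cos2 e); unfold Rsqr in *.
  field_simplify; nra.
Qed.

Lemma Theta_2_neg a : a < 1 -> exists e, 0 < e < PI /\ Theta 2 a e (PI - e) < 0.
Proof.
  intros Ha; set (e := Rmin 1 ((1 - a) / 4)).
  assert (He : 0 < e) by (apply Rmin_glb_lt; lra).
  assert (e <= 1) by apply Rmin_l.
  assert (e <= (1 - a) / 4) by apply Rmin_r.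
  pose proof PI2_1.
  exists e; split; [lra|]; rewrite Theta_2_antipodal.
  pose proof (sin_lt_x e He); pose proof (sin_gt_0 e He ltac:(lra)).
  assert (sin e ^ 2 < (1 - a) / 2) by nra.
  assert (0 < sin e ^ 2) by (apply pow_lt; lra).
  nra.
Qed.

Theorem theorem3p10 (a : R) :
  (forall (n : nat) (x y : R), (1 <= n)%nat ->
     0 < x < PI -> 0 < y < PI -> Theta n a x y > 0)
  <-> 1 <= a.
Proof.
  split.
  - intros Hpos; destruct (Rlt_le_dec a 1) as [Ha|Ha]; [|assumption].
    destruct (Theta_2_neg a Ha) as [e [He Hneg]].
    assert (He' : 0 < PI - e < PI) by lra.
    specialize (Hpos 2%nat e (PI - e) ltac:(lia) He He'); lra.
  - intros Ha n x y Hn Hx Hy; apply Theta_pos; assumption.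
Qed.
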